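(* $[N,L_G]=-i\mathbf 1$ on $\mathrm D(NL_G)\cap\mathrm D(L_GN)$.
   Context: $\ell^2=\ell^2(\mathbb N)$, $\mathbb N=\{0,1,\dots\}$, basis $(\xi_n)$; $N\xi_n=n\xi_n$ (self-adjoint, maximal domain); $L$ left shift ($L\xi_n=\xi_{n-1}$, $L\xi_0=0$), $L^*$ right shift. $L_G$ is defined by $\mathrm D(L_G)=\{\varphi\in\ell^2:\lim_{K\to\infty}\sum_{k=1}^K\frac1k(L^{*k}-L^k)\varphi\text{ exists}\}$, $L_G\varphi=i\sum_{k=1}^\infty\frac1k(L^{*k}-L^k)\varphi$. Products of operators have their natural domains, and ''$[A,B]=C$ on $\mathcal D$'' means $(AB-BA)\varphi=C\varphi$ for $\varphi\in\mathcal D\subset\mathrm D(AB)\cap\mathrm D(BA)$. *)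

From Stdlib Require Import Reals.
From Coquelicot Require Import Coquelicot.
Open Scope R_scope.

Definition l2 (f : nat -> C) : Prop := ex_series (fun n => (Cmod (f n)) ^ 2).

Definition l2_dist2 (f g : nat -> C) : R :=
  Series (fun n => (Cmod (Cminus (f n) (g n))) ^ 2).

Definition l2_lim (u : nat -> nat -> C) (g : nat -> C) : Prop :=
  l2 g /\ (forall K, l2 (u K)) /\ is_lim_seq (fun K => l2_dist2 (u K) g) 0.

(* left shift L xi_n = xi_{n-1}, L xi_0 = 0 : (L f)(n) = f(n+1) *)
Definition Lsh (f : nat -> C) : nat -> C := fun n => f (S n).
Definition Rsh (f : nat -> C) : nat -> C :=
  fun n => match n with O => RtoC 0 | S m => f m end.

Definition LG_partial (K : nat) (f : nat -> C) : nat -> C :=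
  fun n => sum_n_m (G := C_AbelianMonoid)
    (fun k => Cmult (RtoC (/ INR k))
                    (Cminus (Nat.iter k Rsh f n) (Nat.iter k Lsh f n))) 1 K.

(* Graph of L_G: f in D(L_G) and h = L_G f. *)
Definition LG_graph (f h : nat -> C) : Prop :=
  l2 f /\ exists g, l2_lim (fun K => LG_partial K f) g /\
                    forall n, h n = Cmult Ci (g n).

(* Graph of N (maximal domain): f in D(N) and h = N f. *)
Definition N_graph (f h : nat -> C) : Prop :=
  l2 f /\ l2 (fun n => Cmult (RtoC (INR n)) (f n)) /\
  forall n, h n = Cmult (RtoC (INR n)) (f n).

(* Writing [N] for multiplication by [n], a direct computation gives
   [(N P_K - P_K N) phi (n) = sum_{k=1}^K (phi(n-k) + phi(n+k))] for the partial sums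
   [P_K] of the series defining [-i L_G] (with [phi(m) = 0] for [m < 0]).  Hence for
   [K >= n], [(N P_K - P_K N) phi (n) + phi(n)] is the partial sum of [phi] up to [n+K].
   Letting [K -> oo], the value [E(n) := (-i (N L_G - L_G N) phi + phi)(n)] is the limit
   of the partial sums of [phi], so it does not depend on [n]; since
   [N L_G phi], [L_G N phi] and [phi] lie in l^2, [E(n) -> 0], so [E = 0]. *)
From Stdlib Require Import Reals.
From Coquelicot Require Import Coquelicot.
From Stdlib Require Import Lia Lra.

Lemma iter_Lsh k f n : Nat.iter k Lsh f n = f (n + k)%nat.
Proof.
  revert n; induction k as [|k IHk]; intro n; simpl.
  - now rewrite Nat.add_0_r.
  - unfold Lsh at 1. rewrite IHk. f_equal; lia.
Qed.

Lemma iter_Rsh k f n :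
  Nat.iter k Rsh f n = if (k <=? n)%nat then f (n - k)%nat else RtoC 0.
Proof.
  revert n; induction k as [|k IHk]; intro n; simpl.
  - now rewrite Nat.sub_0_r.
  - unfold Rsh at 1. destruct n; [reflexivity|]. now rewrite IHk.
Qed.

Lemma Ci_sqr : Cmult Ci Ci = RtoC (-1).
Proof. apply injective_projections; simpl; ring. Qed.

Lemma sum_shifts_window (phi : nat -> C) n K :
  Cplus (sum_n_m (G := C_AbelianMonoid)
           (fun k => Cplus (Nat.iter k Rsh phi n) (Nat.iter k Lsh phi n)) 1 K) (phi n)
  = sum_n_m (G := C_AbelianMonoid) phi (n - K) (n + K).
Proof.
  induction K as [|K IHK].
  - rewrite sum_n_m_zero by lia. rewrite Nat.sub_0_r, Nat.add_0_r, sum_n_n.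
    unfold zero; simpl. ring.
  - rewrite sum_n_Sm, iter_Lsh, iter_Rsh by lia.
    replace (n + S K)%nat with (S (n + K)) by lia.
    rewrite (sum_n_Sm _ (n - S K)) by lia.
    destruct (S K <=? n)%nat eqn:E.
    + apply Nat.leb_le in E.
      replace (n - K)%nat with (S (n - S K)) in IHK by lia.
      rewrite (sum_Sn_m _ (n - S K)), <- IHK by lia.
      unfold plus; simpl. ring.
    + apply Nat.leb_gt in E.
      replace (n - S K)%nat with (n - K)%nat by lia. rewrite <- IHK.
      unfold plus; simpl. ring.
Qed.

Section NumberCommutator.

Variables phi c : nat -> C.
Hypothesis c_eq : forall m, c m = Cmult (RtoC (INR m)) (phi m).

Lemma commutator_shift_term n k : (1 <= k)%nat ->
  Cminus (Cmult (RtoC (INR n)) (Cmult (RtoC (/ INR k))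
            (Cminus (Nat.iter k Rsh phi n) (Nat.iter k Lsh phi n))))
         (Cmult (RtoC (/ INR k)) (Cminus (Nat.iter k Rsh c n) (Nat.iter k Lsh c n)))
  = Cplus (Nat.iter k Rsh phi n) (Nat.iter k Lsh phi n).
Proof.
  intro Hk.
  assert (Hk0 : INR k <> 0) by (apply not_0_INR; lia).
  rewrite !iter_Lsh, !iter_Rsh, RtoC_inv by exact Hk0.
  destruct (k <=? n)%nat eqn:E; rewrite !c_eq, plus_INR, RtoC_plus.
  1: apply Nat.leb_le in E; rewrite minus_INR, RtoC_minus by exact E.
  all: field; intro H; apply Hk0; now injection H.
Qed.

Lemma LG_partial_commutator n K :
  Cminus (Cmult (RtoC (INR n)) (LG_partial K phi n)) (LG_partial K c n)
  = sum_n_m (G := C_AbelianMonoid)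
      (fun k => Cplus (Nat.iter k Rsh phi n) (Nat.iter k Lsh phi n)) 1 K.
Proof.
  unfold LG_partial. induction K as [|K IHK].
  - rewrite !sum_n_m_zero by lia. unfold zero; simpl. ring.
  - rewrite !sum_n_Sm by lia.
    rewrite <- IHK, <- commutator_shift_term by lia.
    unfold plus; simpl. ring.
Qed.

Lemma LG_partial_commutator_partial_sum n K : (n <= K)%nat ->
  Cplus (Cminus (Cmult (RtoC (INR n)) (LG_partial K phi n)) (LG_partial K c n)) (phi n)
  = sum_n (G := C_AbelianMonoid) phi (n + K).
Proof.
  intro HnK. rewrite LG_partial_commutator, sum_shifts_window.
  now replace (n - K)%nat with 0%nat by lia.
Qed.

End NumberCommutator.

Section ComplexLimits.

Context {T : Type} {F : (T -> Prop) -> Prop} {FF : Filter F}.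

Lemma filterlim_Cplus (u v : T -> C) (x y : C) :
  filterlim u F (locally x) -> filterlim v F (locally y) ->
  filterlim (fun t => Cplus (u t) (v t)) F (locally (Cplus x y)).
Proof.
  intros Hu Hv. exact (filterlim_comp_2 _ _ _ Hu Hv (filterlim_plus (V := C_NormedModule) x y)).
Qed.

Lemma filterlim_Cmult_l (k : C) (u : T -> C) (x : C) :
  filterlim u F (locally x) ->
  filterlim (fun t => Cmult k (u t)) F (locally (Cmult k x)).
Proof.
  intro Hu. eapply filterlim_comp; [exact Hu | exact (filterlim_scal_r (V := C_NormedModule) k x)].
Qed.

End ComplexLimits.

Lemma filterlim_C_of_sqr_Cmod (u : nat -> C) (l : C) :
  is_lim_seq (fun K => Cmod (Cminus (u K) l) ^ 2) 0 ->
  filterlim u eventually (locally l).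
Proof.
  intro Hlim. apply filterlim_locally. intro eps.
  apply is_lim_seq_spec in Hlim.
  destruct (Hlim (mkposreal (eps ^ 2) (pow_lt _ _ (cond_pos eps)))) as [N HN].
  exists N. intros K HK. apply (norm_compat1 (V := C_NormedModule)).
  change (Cmod (Cminus (u K) l) < eps).
  specialize (HN K HK). simpl in HN. rewrite Rminus_0_r in HN.
  pose proof (Cmod_ge_0 (Cminus (u K) l)). pose proof (cond_pos eps).
  assert (Cmod (Cminus (u K) l) ^ 2 < eps ^ 2) by (eapply Rle_lt_trans; [apply Rle_abs|exact HN]).
  nra.
Qed.

Lemma filterlim_shift_nat {U : Type} (u : nat -> U) (G : (U -> Prop) -> Prop) n :
  filterlim (fun K => u (n + K)%nat) eventually G -> filterlim u eventually G.
Proof.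
  intros Hu P HP. destruct (Hu P HP) as [N HN].
  exists (n + N)%nat. intros j Hj. replace j with (n + (j - n))%nat by lia.
  apply HN. lia.
Qed.

Lemma sum_n_ge_term (a : nat -> R) : (forall k, 0 <= a k) -> forall n, a n <= sum_n a n.
Proof.
  intros Ha [|n].
  - rewrite sum_O. lra.
  - rewrite sum_Sn. unfold plus; simpl.
    assert (0 <= sum_n a n).
    { induction n as [|n IHn]; [rewrite sum_O; apply Ha|].
      rewrite sum_Sn. unfold plus; simpl. specialize (Ha (S n)). lra. }
    lra.
Qed.

Lemma Series_ge_term (a : nat -> R) :
  (forall k, 0 <= a k) -> ex_series a -> forall n, a n <= Series a.
Proof.
  intros Ha Hex n. eapply Rle_trans; [now apply sum_n_ge_term|].
  apply (is_lim_seq_incr_compare (sum_n a)).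
  - exact (Series_correct _ Hex).
  - intro k. rewrite sum_Sn. unfold plus; simpl. specialize (Ha (S k)). lra.
Qed.

Lemma ex_series_l2_dist2 f g : l2 f -> l2 g ->
  ex_series (fun n => Cmod (Cminus (f n) (g n)) ^ 2).
Proof.
  intros Hf Hg.
  apply (ex_series_le (V := R_CompleteNormedModule) _
           (fun n => 2 * Cmod (f n) ^ 2 + 2 * Cmod (g n) ^ 2)).
  - intro n. change (Rabs (Cmod (Cminus (f n) (g n)) ^ 2)
                     <= 2 * Cmod (f n) ^ 2 + 2 * Cmod (g n) ^ 2).
    rewrite Rabs_right by (apply Rle_ge, pow2_ge_0).
    pose proof (Cmod_triangle (f n) (Copp (g n))) as T. rewrite Cmod_opp in T.
    pose proof (Cmod_ge_0 (Cminus (f n) (g n))).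
    pose proof (Cmod_ge_0 (f n)). pose proof (Cmod_ge_0 (g n)).
    unfold Cminus in *.
    set (x := Cmod (f n + - g n)%C) in *. set (y := Cmod (f n)) in *. set (z := Cmod (g n)) in *.
    assert (x * x <= (y + z) * (y + z)) by (apply Rmult_le_compat; lra).
    pose proof (Rle_0_sqr (y - z)). unfold Rsqr in *. simpl. nra.
  - apply (ex_series_plus (V := R_NormedModule));
      now apply (ex_series_scal (V := R_NormedModule) 2).
Qed.

Lemma l2_lim_pointwise u g n :
  l2_lim u g -> filterlim (fun K => u K n) eventually (locally (g n)).
Proof.
  intros [Hg [Hu Hdist]]. apply filterlim_C_of_sqr_Cmod.
  apply (is_lim_seq_le_le (fun _ => 0) _ (fun K => l2_dist2 (u K) g)); [|apply is_lim_seq_const|exact Hdist].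
  intro K. split; [apply pow2_ge_0|].
  apply (Series_ge_term (fun m => Cmod (Cminus (u K m) (g m)) ^ 2)).
  - intro m. apply pow2_ge_0.
  - now apply ex_series_l2_dist2.
Qed.

Lemma l2_tendsto_0 f : l2 f -> filterlim f eventually (locally (RtoC 0)).
Proof.
  intro Hf. apply filterlim_C_of_sqr_Cmod.
  apply (is_lim_seq_ext (fun n => Cmod (f n) ^ 2)); [|exact (ex_series_lim_0 _ Hf)].
  intro n. do 2 f_equal. ring.
Qed.

Lemma partial_sums_tendsto_LG_commutator (phi c g g' : nat -> C) :
  (forall m, c m = Cmult (RtoC (INR m)) (phi m)) ->
  l2_lim (fun K => LG_partial K phi) g -> l2_lim (fun K => LG_partial K c) g' ->
  forall m, filterlim (sum_n (G := C_AbelianMonoid) phi) eventually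
              (locally (Cplus (Cminus (Cmult (RtoC (INR m)) (g m)) (g' m)) (phi m))).
Proof.
  intros Hc Hg Hg' m. apply (filterlim_shift_nat _ _ m).
  apply (filterlim_ext_loc (fun K => Cplus (Cplus (Cmult (RtoC (INR m)) (LG_partial K phi m))
                                       (Cmult (RtoC (-1)) (LG_partial K c m))) (phi m))).
  { exists m. intros K HK. rewrite <- (LG_partial_commutator_partial_sum _ _ Hc) by exact HK.
    unfold Cminus. ring. }
  replace (Cplus (Cminus (Cmult (RtoC (INR m)) (g m)) (g' m)) (phi m))
    with (Cplus (Cplus (Cmult (RtoC (INR m)) (g m)) (Cmult (RtoC (-1)) (g' m))) (phi m))
    by (unfold Cminus; ring).
  apply filterlim_Cplus; [apply filterlim_Cplus|apply filterlim_const];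
    apply filterlim_Cmult_l;
    [exact (l2_lim_pointwise _ _ m Hg) | exact (l2_lim_pointwise _ _ m Hg')].
Qed.

Lemma limits_of_one_sequence_eq {K : AbsRing} {V : NormedModule K} (S E : nat -> V) (l : V) :
  (forall m, filterlim S eventually (locally (E m))) ->
  filterlim E eventually (locally l) -> forall m, E m = l.
Proof.
  intros HS HE m.
  assert (E_const : forall j, E j = E m)
    by (intro j; exact (filterlim_locally_unique _ _ _ (HS j) (HS m))).
  assert (E_to_Em : filterlim E eventually (locally (E m))).
  { apply (filterlim_ext (fun _ => E m)); [intro j; symmetry; apply E_const|].
    apply filterlim_const. }
  exact (filterlim_locally_unique _ _ _ E_to_Em HE).
Qed.

Theorem mainTheorem10 :
  forall phi a b c d : nat -> C,
    LG_graph phi a -> N_graph a b ->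
    N_graph phi c -> LG_graph c d ->
    forall n, Cminus (b n) (d n) = Cmult (Copp Ci) (phi n).
Proof.
  intros phi a b c d [Hphi [g [Hg Ha]]] [_ [Hna Hb]] [_ [_ Hc]] [_ [g' [Hg' Hd]]] n.
  set (E := fun m => Cplus (Cminus (Cmult (RtoC (INR m)) (g m)) (g' m)) (phi m)).
  assert (E_to_0 : filterlim E eventually (locally (RtoC 0))).
  { apply (filterlim_ext (fun m => Cplus (Cplus (Cmult (Copp Ci) (Cmult (RtoC (INR m)) (a m)))
                                               (Cmult Ci (Cmult Ci (g' m)))) (phi m))).
    { intro m. unfold E. rewrite Ha, Cmult_assoc with (x := Ci) (y := Ci), Ci_sqr.
      replace (Cmult (Copp Ci) (Cmult (RtoC (INR m)) (Cmult Ci (g m))))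
        with (Cmult (Copp (Cmult Ci Ci)) (Cmult (RtoC (INR m)) (g m))) by ring.
      rewrite Ci_sqr. unfold Cminus. ring. }
    replace (RtoC 0) with (Cplus (Cplus (Cmult (Copp Ci) (RtoC 0)) (Cmult Ci (Cmult Ci (RtoC 0))))
                                 (RtoC 0)) by ring.
    apply filterlim_Cplus; [apply filterlim_Cplus|].
    - apply filterlim_Cmult_l. exact (l2_tendsto_0 _ Hna).
    - do 2 apply filterlim_Cmult_l. exact (l2_tendsto_0 _ (proj1 Hg')).
    - exact (l2_tendsto_0 _ Hphi). }
  assert (E_n : E n = RtoC 0)
    by exact (limits_of_one_sequence_eq _ E _
                (partial_sums_tendsto_LG_commutator _ _ _ _ Hc Hg Hg') E_to_0 n).
  rewrite Hb, Hd, Ha.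
  replace (Cmult (Copp Ci) (phi n)) with (Cmult Ci (Cminus (E n) (phi n)))
    by (rewrite E_n; ring).
  unfold E. ring.
Qed.
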